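(* Let $q$ be even and let $H$ be a $BH(n,q)$ matrix, $H_{i,j}=e^{2\pi i L_{i,j}/q}$ with $L$ an integer matrix, whose $\mathbb{Z}_q$-rank is $r$. Suppose there exist integer matrices $Q$ of size $n\times r$ and $S$ of size $r\times n$ with $QS\equiv L\pmod q$ such that every entry of the first row of $S$ is even. Then there exists a $BH(2n,q)$ matrix whose $\mathbb{Z}_q$-rank is $r$.
   Context: A $BH(n,q)$ matrix is an $n\times n$ complex matrix whose entries are $q$-th roots of unity and which satisfies $HH^\ast=nI_n$. The $\mathbb{Z}_q$-rank of an $n\times n$ integer matrix $L$ is the smallest positive integer $r$ such that there exist integer matrices $S$ ($n\times r$) and $T$ ($r\times n$) with $ST\equiv L\pmod q$ entrywise; the $\mathbb{Z}_q$-rank of a $BH(n,q)$ matrix $H$ is that of the integer matrix $L$ with entries in $\{0,\dots,q-1\}$ and $H_{i,j}=e^{2\pi i L_{i,j}/q}$. *)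

(* complex numbers are algC (algebraic complex numbers),
   which contain all roots of unity. *)
From HB Require Import structures.
From mathcomp Require Import all_boot all_order all_algebra all_field.
Set Implicit Arguments. Unset Strict Implicit. Unset Printing Implicit Defensive.
Import Order.TTheory GRing.Theory Num.Theory.
Local Open Scope ring_scope.

(* e^{2 pi i / q}: q.-root (-1) is e^{i pi / q} (minimal argument root). *)
Definition zeta (q : nat) : algC := (q.-root (-1)) ^+ 2.

Definition BH (n q : nat) (H : 'M[algC]_n) : Prop :=
  (forall i j, H i j ^+ q = 1) /\
  H *m (map_mx (@Num.conj algC) H)^T = (n%:R)%:M.

Definition Zq_factors (n q r : nat) (L : 'M[int]_n) : Prop :=
  exists (S : 'M[int]_(n, r)) (T : 'M[int]_(r, n)),
    forall i j, ((S *m T) i j = L i j %[mod q%:Z])%Z.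

Definition Zq_rank_is (n q r : nat) (L : 'M[int]_n) : Prop :=
  (0 < r)%N /\ Zq_factors q r L /\
  (forall r' : nat, (0 < r')%N -> Zq_factors q r' L -> (r <= r')%N).

Definition BH_Zq_rank_is (n q r : nat) (H : 'M[algC]_n) : Prop :=
  exists L : 'M[int]_n,
    (forall i j, (0 <= L i j) /\ (L i j < q%:Z)) /\
    (forall i j, H i j = zeta q ^ (L i j)) /\
    Zq_rank_is q r L.

From HB Require Import structures.
From mathcomp Require Import all_boot all_order all_algebra all_field.
From mathcomp Require Import ring.
Set Implicit Arguments. Unset Strict Implicit. Unset Printing Implicit Defensive.
Import Order.TTheory GRing.Theory Num.Theory.
Local Open Scope ring_scope.

(* For a BH(n,q) matrix H (q even), a column c of integers and
   d = (zeta^(c i))_i, the block matrix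
        H' = [ H   D H ]      D = diag d,
             [ H  -D H ]
   is a BH(2n,q) matrix: its Gram matrix is block-diagonal with blocks
   H H^* + (D H)(D H)^* = 2n I, and -1 is a q-th root of unity since q is
   even.  If H = zeta^L, then H' = zeta^L' with
        L' = [ L   L + c     ]      (h = q/2, so zeta^h = -1).
             [ L   L + c + h ]
   Choosing c as the column i0 of Q, where Q S = L (mod q) and the row i0
   of S is even, L' factors through r over Z_q as
   [Q; Q + h E^T] [S, S + E] with E the indicator matrix of row i0, while
   any factorization of L' restricts to one of its upper-left block L; so
   L' has the same Z_q-rank r as L. *)

Lemma zeta_expq (q : nat) : (0 < q)%N -> zeta q ^+ q = 1.
Proof. by move=> q0; rewrite /zeta -exprM mulnC exprM rootCK // sqrrN expr1n. Qed.

(* zeta q is a square root of the primitive root q.-root (-1), so its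
   (q/2)-th power is -1. *)
Lemma zeta_exp_half (q h : nat) : (0 < q)%N -> q = (h + h)%N -> zeta q ^+ h = -1.
Proof. by move=> q0 qh; rewrite /zeta -exprM mul2n -addnn -qh rootCK. Qed.

Lemma zeta_neq0 (q : nat) : (0 < q)%N -> zeta q != 0.
Proof.
move=> q0; apply/eqP => z0; have := zeta_expq q0.
by rewrite z0 expr0n gtn_eqF //= => /eqP; rewrite eq_sym oner_eq0.
Qed.

Lemma zetaz_expq (q : nat) (k : int) : (0 < q)%N -> (zeta q ^ k) ^+ q = 1.
Proof.
move=> q0; rewrite exprnP exprz_exp mulrC -exprz_exp -exprnP zeta_expq //.
by rewrite exp1rz.
Qed.

Lemma zetaz_modz (q : nat) (k : int) : (0 < q)%N -> zeta q ^ (k %% q)%Z = zeta q ^ k.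
Proof.
move=> q0; rewrite [in RHS](divz_eq k q) [in RHS]exprzDr ?unitfE ?zeta_neq0 //.
by rewrite -exprz_exp -[_ ^ q]exprnP zetaz_expq // mul1r.
Qed.

Lemma root_of_unity_conj (q : nat) (x : algC) : (0 < q)%N -> x ^+ q = 1 -> x * x^* = 1.
Proof.
move=> q0 hx; rewrite -normCK.
have : `|x| ^+ q == 1 by rewrite -normrX hx normr1.
by rewrite pexpr_eq1 // => /eqP ->; rewrite expr1n.
Qed.

Definition doubling (n : nat) (H : 'M[algC]_n) (d : 'rV[algC]_n) : 'M[algC]_(n + n) :=
  block_mx H (diag_mx d *m H) H (- (diag_mx d *m H)).

Lemma diag_unimodular_gram (n : nat) (H : 'M[algC]_n) (d : 'rV[algC]_n) (a : algC) :
  H *m (map_mx Num.conj H)^T = a%:M -> (forall i, d 0 i * (d 0 i)^* = 1) ->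
  (diag_mx d *m H) *m (map_mx Num.conj (diag_mx d *m H))^T = a%:M.
Proof.
move=> HH dd; rewrite map_mxM trmx_mul mulmxA -(mulmxA _ H) HH mul_mx_scalar.
rewrite -scalemxAl map_diag_mx tr_diag_mx mulmx_diag -[RHS]scalemx1.
congr (_ *: _); apply/matrixP => i j; rewrite !mxE.
by case: eqP => // _; rewrite mulr1n dd.
Qed.

Lemma doubling_gram (n : nat) (H : 'M[algC]_n) (d : 'rV[algC]_n) (a : algC) :
  H *m (map_mx Num.conj H)^T = a%:M -> (forall i, d 0 i * (d 0 i)^* = 1) ->
  doubling H d *m (map_mx Num.conj (doubling H d))^T = (a + a)%:M.
Proof.
move=> HH dd; have KK := diag_unimodular_gram HH dd.
rewrite /doubling map_block_mx tr_block_mx mulmx_block map_mxN linearN /=.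
rewrite !mulmxN !mulNmx opprK HH KK subrr (scalar_mx_block n n).
by rewrite raddfD.
Qed.

Lemma doubling_roots (n q : nat) (H : 'M[algC]_n) (d : 'rV[algC]_n) :
  ~~ odd q -> (forall i j, H i j ^+ q = 1) -> (forall i, d 0 i ^+ q = 1) ->
  forall i j, doubling H d i j ^+ q = 1.
Proof.
move=> qe Hq dq i j; rewrite /doubling -(splitK i) -(splitK j).
have DHq a b : (diag_mx d *m H) a b ^+ q = 1.
  by rewrite mul_diag_mx mxE exprMn dq Hq mulr1.
case: (split i) => a; case: (split j) => b.
- by rewrite block_mxEul.
- by rewrite block_mxEur.
- by rewrite block_mxEdl.
- by rewrite block_mxEdr mxE -mulN1r exprMn -signr_odd (negbTE qe) mul1r.
Qed.

Lemma doubling_BH (n q : nat) (H : 'M[algC]_n) (d : 'rV[algC]_n) :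
  (0 < q)%N -> ~~ odd q -> BH q H -> (forall i, d 0 i ^+ q = 1) ->
  BH q (doubling H d).
Proof.
move=> q0 qe [Hq HH] dq; split; first exact: doubling_roots.
rewrite natrD; apply: doubling_gram HH _ => i.
exact: root_of_unity_conj q0 (dq i).
Qed.

Definition doubling_exponents (n : nat) (L : 'M[int]_n) (c : 'I_n -> int) (h : int)
  : 'M[int]_(n + n) :=
  block_mx L (\matrix_(i, j) (L i j + c i)) L (\matrix_(i, j) (L i j + c i + h)).

Lemma doubling_zeta_exponents (n q h : nat) (H : 'M[algC]_n) (L : 'M[int]_n)
    (c : 'I_n -> int) :
  (0 < q)%N -> q = (h + h)%N -> (forall i j, H i j = zeta q ^ L i j) ->
  forall i j, doubling H (\row_k zeta q ^ c k) i j
              = zeta q ^ doubling_exponents L c h%:Z i j.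
Proof.
move=> q0 qh HL i j; rewrite /doubling /doubling_exponents -(splitK i) -(splitK j).
have zU : zeta q \is a GRing.unit by rewrite unitfE zeta_neq0.
have DH a b : (diag_mx (\row_k zeta q ^ c k) *m H) a b = zeta q ^ (L a b + c a).
  by rewrite mul_diag_mx !mxE HL exprzDr // mulrC.
case: (split i) => a; case: (split j) => b.
- by rewrite !block_mxEul.
- by rewrite !block_mxEur DH mxE.
- by rewrite !block_mxEdl.
- rewrite !block_mxEdr mxE DH mxE [in RHS]exprzDr // -[zeta q ^ h%:Z]exprnP.
  by rewrite (zeta_exp_half q0 qh) mulrN1.
Qed.

Lemma Zq_factors_congr (n q r : nat) (L L' : 'M[int]_n) :
  (forall i j, (L i j = L' i j %[mod q%:Z])%Z) ->
  Zq_factors q r L -> Zq_factors q r L'.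
Proof. by move=> LL' [S [T ST]]; exists S, T => i j; rewrite ST LL'. Qed.

Lemma Zq_factors_ulblock (n q r : nat) (A B C D : 'M[int]_n) :
  Zq_factors q r (block_mx A B C D) -> Zq_factors q r A.
Proof.
move=> [S [T ST]]; exists (usubmx S), (lsubmx T) => i j.
rewrite mul_usub_mx mulmx_lsub !mxE.
by have := ST (lshift n i) (lshift n j); rewrite block_mxEul mxE.
Qed.

Lemma Zq_rank_block (n q r : nat) (L B C D : 'M[int]_n) :
  Zq_rank_is q r L -> Zq_factors q r (block_mx L B C D) ->
  Zq_rank_is q r (block_mx L B C D).
Proof.
move=> [r0 [_ rmin]] fact; split=> //; split=> [//|r' r'0 /Zq_factors_ulblock].
exact: rmin.
Qed.

(* A matrix zeta^M with M of Z_q-rank r has Z_q-rank r as a BH matrix: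
   reducing M modulo q gives the normalized exponent matrix. *)
Lemma BH_Zq_rank_of_exponents (n q r : nat) (H : 'M[algC]_n) (M : 'M[int]_n) :
  (0 < q)%N -> (forall i j, H i j = zeta q ^ M i j) -> Zq_rank_is q r M ->
  BH_Zq_rank_is q r H.
Proof.
move=> q0 HM [r0 [fact rmin]].
pose Mq := map_mx (fun x => (x %% q%:Z)%Z) M.
have MMq i j : (M i j = Mq i j %[mod q%:Z])%Z by rewrite mxE modz_mod.
exists Mq; split; [|split; [|split; [|split]]] => //.
- move=> i j; rewrite mxE modz_ge0 ?ltz_pmod ?ltz_nat //.
  by rewrite eqz_nat -lt0n.
- by move=> i j; rewrite mxE zetaz_modz // HM.
- exact: Zq_factors_congr fact.
- move=> r' r'0 fact'; apply: rmin r'0 _; apply: Zq_factors_congr fact' => i j.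
  exact/esym/MMq.
Qed.

Lemma block_mx_eqmodz (m n q : nat) (A A' B B' C C' D D' : 'M[int]_(m, n)) :
  (forall i j, (A i j = A' i j %[mod q%:Z])%Z) ->
  (forall i j, (B i j = B' i j %[mod q%:Z])%Z) ->
  (forall i j, (C i j = C' i j %[mod q%:Z])%Z) ->
  (forall i j, (D i j = D' i j %[mod q%:Z])%Z) ->
  forall i j, (block_mx A B C D i j = block_mx A' B' C' D' i j %[mod q%:Z])%Z.
Proof.
move=> AA BB CC DD i j; rewrite -(splitK i) -(splitK j).
case: (split i) => a; case: (split j) => b.
- by rewrite !block_mxEul.
- by rewrite !block_mxEur.
- by rewrite !block_mxEdl.
- by rewrite !block_mxEdr.
Qed.

Definition row_indicator {R : pzRingType} (r n : nat) (i0 : 'I_r) : 'M[R]_(r, n) :=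
  \matrix_(k, j) (k == i0)%:R.

Lemma mulmx_row_indicator (R : pzRingType) (m r n : nat) (A : 'M[R]_(m, r))
    (i0 : 'I_r) i j :
  (A *m row_indicator n i0) i j = A i i0.
Proof.
rewrite !mxE (bigD1 i0) //= big1 ?addr0; first by rewrite mxE eqxx mulr1.
by move=> k /negbTE nk; rewrite mxE nk mulr0.
Qed.

Lemma tr_row_indicator_mulmx (R : pzRingType) (m r n : nat) (B : 'M[R]_(r, n))
    (i0 : 'I_r) i j :
  ((row_indicator m i0)^T *m B) i j = B i0 j.
Proof.
rewrite !mxE (bigD1 i0) //= big1 ?addr0; first by rewrite !mxE eqxx mul1r.
by move=> k /negbTE nk; rewrite !mxE nk mul0r.
Qed.

Lemma half_mul_even_modz (q : nat) (h s : int) :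
  q%:Z = h + h -> (2 %| s)%Z -> (h * s = 0 %[mod q%:Z])%Z.
Proof.
move=> qh /dvdzP [t ->]; have -> : h * (t * 2) = t * q%:Z by rewrite qh; ring.
by rewrite modzMl mod0z.
Qed.

(* If Q S = L (mod q) and the row i0 of S is even, the doubling exponents
   built from the column i0 of Q factor through r modulo q = 2h:
   [L, L + c; L, L + c + h] = [Q; Q + h E^T] [S, S + E], E = row_indicator i0. *)
Lemma doubling_exponents_factors (n q r : nat) (L : 'M[int]_n)
    (Q : 'M[int]_(n, r)) (S : 'M[int]_(r, n)) (i0 : 'I_r) (h : int) :
  q%:Z = h + h ->
  (forall i j, ((Q *m S) i j = L i j %[mod q%:Z])%Z) ->
  (forall j, (2 %| S i0 j)%Z) ->
  Zq_factors q r (doubling_exponents L (fun i => Q i i0) h).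
Proof.
move=> qh QS Sev; pose C : 'M[int]_(n, r) := h *: (row_indicator n i0)^T.
have QCS i j : (((Q + C) *m S) i j = L i j %[mod q%:Z])%Z.
  rewrite mulmxDl [(Q *m S + _) i j]mxE -scalemxAl [(h *: (_ *m S)) i j]mxE.
  by rewrite tr_row_indicator_mulmx -modzDmr half_mul_even_modz // mod0z addr0 QS.
have QCi0 i : (Q + C) i i0 = Q i i0 + h by rewrite !mxE eqxx mulr1.
exists (col_mx Q (Q + C)), (row_mx S (S + row_indicator n i0)).
rewrite mul_col_row; apply: block_mx_eqmodz => // i j.
- rewrite mulmxDr [(Q *m S + _) i j]mxE mulmx_row_indicator [in RHS]mxE.
  by rewrite -[in LHS]modzDml QS modzDml.
- rewrite mulmxDr [((Q + C) *m S + _) i j]mxE mulmx_row_indicator QCi0.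
  by rewrite [in RHS]mxE -addrA -[in LHS]modzDml QCS modzDml.
Qed.

Lemma castmx_BH (m1 m2 q : nat) (e : m1 = m2) (A : 'M[algC]_m1) :
  BH q A -> BH q (castmx (e, e) A).
Proof. by case: m2 / e; rewrite castmx_id. Qed.

Lemma castmx_BH_Zq_rank (m1 m2 q r : nat) (e : m1 = m2) (A : 'M[algC]_m1) :
  BH_Zq_rank_is q r A -> BH_Zq_rank_is q r (castmx (e, e) A).
Proof. by case: m2 / e; rewrite castmx_id. Qed.

Theorem corollary1 (n q r : nat) (H : 'M[algC]_n) (L : 'M[int]_n) :
  (0 < q)%N -> ~~ odd q ->
  BH q H ->
  (forall i j, H i j = zeta q ^ (L i j)) ->
  Zq_rank_is q r L ->
  (exists (Q : 'M[int]_(n, r)) (S : 'M[int]_(r, n)),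
      (forall i j, ((Q *m S) i j = L i j %[mod q%:Z])%Z) /\
      (forall (i : 'I_r) (j : 'I_n), val i = 0%N -> (2 %| S i j)%Z)) ->
  exists H' : 'M[algC]_(2 * n), BH q H' /\ BH_Zq_rank_is q r H'.
Proof.
move=> q0 qe BHH HL rankL [Q [S [QS Sev]]].
pose i0 : 'I_r := Ordinal rankL.1.
pose h := q./2; have qh : q = (h + h)%N.
  by rewrite addnn -[LHS]odd_double_half (negbTE qe).
have e : (n + n = 2 * n)%N by rewrite mul2n addnn.
exists (castmx (e, e) (doubling H (\row_k zeta q ^ Q k i0))); split.
  apply/castmx_BH/doubling_BH => // k; rewrite mxE; exact: zetaz_expq.
apply/castmx_BH_Zq_rank/(BH_Zq_rank_of_exponents q0).
  exact: (doubling_zeta_exponents (fun k => Q k i0) q0 qh HL).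
apply: (Zq_rank_block rankL); apply: doubling_exponents_factors QS _ => [|j].
  by rewrite qh PoszD.
exact: Sev.
Qed.
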